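(* For all positive integers $m,k$ and all $n\in\mathbb{Z}$, let $$D(n,m,s,k)=\det\left(f(n + mi, x, s)^j f(n + mi - 1, x, qs)^{k-j}\right)_{i,j=0}^k .$$ Then $$D(n,m,s,k) = (-1)^{\binom{k+1}{2}n + \binom{k+1}{3}m}\, s^{\binom{k+1}{2}(n-1) + \binom{k+1}{3}m}\, q^{\binom{k+1}{2}\binom{n}{2} + nm\binom{k+1}{3} + \binom{k+1}{3}\binom{m}{2} + \binom{k+1}{4}m^2} \prod_{j=0}^{k-1} \mathrm{fac}(k - j, x, q^{mj+n}s, m).$$
   Context: Let $x,s,q$ be indeterminates; all quantities live in the field of rational functions in $x,s,q$. The Carlitz $q$-Fibonacci polynomials $f(n,x,s)$ are defined by $f(0,x,s)=0$, $f(1,x,s)=1$ and $f(n, x, s) = x f(n-1, x, s) + q^{n-2} s f(n-2, x, s)$; this recurrence is required to hold for all $n\in\mathbb{Z}$, which uniquely extends $f(n,x,s)$ to negative $n$. Here $f(n,x,q^a s)$ means $f(n,x,s)$ with $s$ replaced by $q^a s$. For positive integers $r,m$ define $\mathrm{fac}(r,x,s,m)=\prod_{i=1}^r f(im,x,s)$. *)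

From HB Require Import structures.
From mathcomp Require Import all_boot all_order all_algebra.
Set Implicit Arguments. Unset Strict Implicit. Unset Printing Implicit Defensive.
Import Order.TTheory GRing.Theory Num.Theory.
Local Open Scope ring_scope.

(* Carlitz q-Fibonacci polynomials over an arbitrary field F:
   f(0)=0, f(1)=1, f(n) = x f(n-1) + q^(n-2) s f(n-2) for all integers n.
   For n >= 0 we compute the pair (f n, f (n+1)) forward; for n <= 0 we
   compute (f (-k), f (-k+1)) backward, solving the recurrence taken at
   index -k+1:  f(-k+1) = x f(-k) + q^(-k-1) s f(-k-1),  i.e.
   f(-k-1) = (f(-k+1) - x f(-k)) * q^(k+1) / s. *)
Section CarlitzFib.
Variables (F : fieldType) (q : F).

Fixpoint cfib_pos (x s : F) (k : nat) : F * F :=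
  match k with
  | 0%N => (0, 1)
  | k'.+1 => let p := cfib_pos x s k' in
             (p.2, x * p.2 + q ^+ k' * s * p.1)
  end.

Fixpoint cfib_neg (x s : F) (k : nat) : F * F :=
  match k with
  | 0%N => (0, 1)
  | k'.+1 => let p := cfib_neg x s k' in
             ((p.2 - x * p.1) * q ^+ k'.+1 / s, p.1)
  end.

Definition cfib (n : int) (x s : F) : F :=
  match n with
  | Posz k => (cfib_pos x s k).1
  | Negz k => (cfib_neg x s k.+1).1
  end.

Definition cfac (r : nat) (x s : F) (m : nat) : F :=
  \prod_(1 <= i < r.+1) cfib (i * m)%:Z x s.
End CarlitzFib.

Definition binz2 (n : int) : int := ((n * (n - 1)) %/ 2)%Z.

(* The field of rational functions in x, s, q (over the rationals),
   realised as the fraction field of Q[q][s][x]. *)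
Definition P3 := {poly {poly {poly rat}}}.
Definition RF := {fraction P3}.
Definition Xx : RF := tofrac ('X : P3).
Definition Xs : RF := tofrac (('X)%:P : P3).
Definition Xq : RF := tofrac (('X)%:P%:P : P3).

(* The matrix is a homogeneous Vandermonde matrix in the pairs
   (a_i, b_i) = (f(n + m i, x, s), f(n + m i - 1, x, q s)), so its determinant
   is the product over i < j of the minors a_j b_i - a_i b_j.  With N = n + m i
   and d = m (j - i), the addition formula
     f(N + d, s) f(N - 1, q s) - f(N, s) f(N + d - 1, q s) = C(N) f(d, q^N s),
   where C(N) = (-1)^N s^(N-1) q^binom(N,2) is the Cassini value (the case
   d = 1), turns row i of that product into C(N)^(k-i) fac(k - i, q^N s, m).
   The powers of C(N) make up the monomial; its exponents are sums over
   arithmetic progressions weighted by k - i. *)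

From HB Require Import structures.
From mathcomp Require Import all_boot all_order all_algebra.
From mathcomp Require Import ring.
Set Implicit Arguments. Unset Strict Implicit. Unset Printing Implicit Defensive.
Import Order.TTheory GRing.Theory Num.Theory.
Local Open Scope ring_scope.

Lemma binz2S (N : int) : binz2 (N + 1) = binz2 N + N.
Proof.
rewrite /binz2 (_ : (N + 1) * (N + 1 - 1) = N * 2 + N * (N - 1)); last by ring.
by rewrite divzMDl // addrC.
Qed.

Lemma binz2E (N : int) : binz2 N * 2 = N * (N - 1).
Proof.
elim/int_ind: N => [//|j IH|j IH].
  by rewrite intS addrC binz2S mulrDl IH; ring.
have := binz2S (- j.+1%:Z).
rewrite (_ : - j.+1%:Z + 1 = - j%:Z); last by rewrite intS; ring.
move=> /(congr1 (fun z => z * 2)); rewrite IH mulrDl => H.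
by rewrite -[LHS](addrK (- j.+1%:Z * 2)) -H intS; ring.
Qed.

Lemma binz2D (a b : int) : binz2 (a + b) = binz2 a + binz2 b + a * b.
Proof. by apply: (@mulIf _ 2) => //; rewrite !mulrDl !binz2E; ring. Qed.

Lemma binz2M (a b : int) : binz2 (a * b) = b * binz2 a + binz2 b * a ^+ 2.
Proof.
apply: (@mulIf _ 2) => //; rewrite mulrDl -mulrA mulrAC !binz2E; ring.
Qed.

Lemma binz2_nat (j : nat) : binz2 j = 'C(j, 2).
Proof.
elim: j => [//|j IH].
by rewrite intS addrC binz2S IH binS bin1 PoszD.
Qed.

Section ArithmeticSums.
Variables (n : int) (m : nat).

Lemma sum_mul_subnS (h : nat -> int) (k : nat) :
  \sum_(i < k.+2) h i * (k.+1 - i)%:Z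
  = \sum_(i < k.+1) h i * (k - i)%:Z + \sum_(i < k.+1) h i.
Proof.
rewrite big_ord_recr /= subnn mulr0 addr0 -big_split /=.
apply: eq_bigr => i _; rewrite subSn ?leq_ord // -[(k - i).+1]addn1 PoszD; ring.
Qed.

Lemma sum_arith (k : nat) :
  \sum_(i < k.+1) (n + (m * i)%:Z) = k.+1%:Z * n + ('C(k.+1, 2) * m)%:Z.
Proof.
elim: k => [|k IH]; first by rewrite big_ord1 /= muln0 mul1r.
rewrite big_ord_recr /= IH (binS k.+1 1) bin1 !PoszM !PoszD; ring.
Qed.

Lemma sum_weighted_arith (k : nat) :
  \sum_(i < k.+1) (n + (m * i)%:Z) * (k - i)%:Z
  = 'C(k.+1, 2)%:Z * n + 'C(k.+1, 3)%:Z * m%:Z.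
Proof.
elim: k => [|k IH]; first by rewrite big_ord1 !bin_small // subnn mulr0 !mul0r addr0.
rewrite (sum_mul_subnS (fun i => n + (m * i)%:Z)) IH sum_arith.
rewrite (binS k.+1 1) (binS k.+1 2) bin1 !PoszM !PoszD; ring.
Qed.

Lemma sum_binz2_arith (k : nat) :
  \sum_(i < k.+1) binz2 (n + (m * i)%:Z)
  = k.+1%:Z * binz2 n + n * m%:Z * 'C(k.+1, 2)%:Z
    + ('C(k.+1, 2) * 'C(m, 2))%:Z + ('C(k.+1, 3) * m ^ 2)%:Z.
Proof.
elim: k => [|k IH]; first by rewrite big_ord1 /= muln0 addr0 (@bin_small 1 2) // (@bin_small 1 3) //
    !mul0n mulr0 !addr0 mul1r.
rewrite big_ord_recr /= IH -!mulnn binz2D !PoszM binz2M !binz2_nat.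
rewrite (binS k.+1 1) (binS k.+1 2) bin1.
move: 'C(k.+1, 2) 'C(k.+1, 3) 'C(m, 2) => c2 c3 cm.
rewrite ?PoszM ?PoszD; ring.
Qed.

Lemma sum_weighted_binz2_arith (k : nat) :
  \sum_(i < k.+1) binz2 (n + (m * i)%:Z) * (k - i)%:Z
  = 'C(k.+1, 2)%:Z * binz2 n + n * m%:Z * 'C(k.+1, 3)%:Z
    + ('C(k.+1, 3) * 'C(m, 2))%:Z + ('C(k.+1, 4) * m ^ 2)%:Z.
Proof.
elim: k => [|k IH]; first by rewrite big_ord1 subnn mulr0 (@bin_small 1 2) // (@bin_small 1 3) //
    (@bin_small 1 4) // !mul0n !mul0r mulr0 !addr0.
rewrite (sum_mul_subnS (fun i => binz2 (n + (m * i)%:Z))) IH sum_binz2_arith.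
rewrite (binS k.+1 1) (binS k.+1 2) (binS k.+1 3) bin1 -!mulnn.
move: 'C(k.+1, 2) 'C(k.+1, 3) 'C(k.+1, 4) 'C(m, 2) => c2 c3 c4 cm.
rewrite ?PoszM ?PoszD; ring.
Qed.

End ArithmeticSums.

Section HomogeneousVandermonde.
Variable R : comNzRingType.

Definition hvandermonde n (a b : 'I_n.+1 -> R) : 'M[R]_n.+1 :=
  \matrix_(i, j) (a j ^+ i * b j ^+ (n - i)).

Definition subdiag_shift n : 'M[R]_n := \matrix_(i, j) (i == j.+1 :> nat)%:R.

Lemma det_scalar_sub_shift n (c d : R) : \det (c%:M - d *: subdiag_shift n) = c ^+ n.
Proof.
rewrite det_trig.
  rewrite (eq_bigr (fun _ => c)) ?prodr_const ?card_ord // => i _.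
  by rewrite !mxE eqxx ltn_eqF // mulr0 subr0.
apply/is_trig_mxP => i j lt_ij; rewrite !mxE ltn_eqF ?mulr0 ?subr0 ?leqW //.
by rewrite -val_eqE /= ltn_eqF.
Qed.

(* Replacing row i by b_0 row_i - a_0 row_(i-1) clears column 0 below row 0
   and factors a_j b_0 - a_0 b_j out of column j. *)
Lemma hvandermonde_elim n (a b : 'I_n.+2 -> R) :
  ((b 0)%:M - a 0 *: subdiag_shift n.+2) *m hvandermonde a b
  = block_mx (b 0 ^+ n.+2)%:M (\row_j (b 0 * b (lift 0 j) ^+ n.+1)) 0
      (hvandermonde (a \o lift 0) (b \o lift 0)
         *m diag_mx (\row_j (a (lift 0 j) * b 0 - a 0 * b (lift 0 j))))
    :> 'M_(1 + n.+1).
Proof.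
rewrite mulmxBl -scalemxAl mul_scalar_mx; apply/matrixP => i j.
rewrite !mxE; under eq_bigr do rewrite !mxE.
case: splitP => [{i}_ -> /[!ord1]|{}i ->].
  rewrite big1 ?mulr0 ?subr0; last by move=> l _; rewrite mul0r.
  rewrite expr0 mul1r subn0; case: (@split_ordP 1 n.+1 j) => [{j}_ -> /[!ord1]|{}j ->].
    by rewrite row_mxEl lshift0 !mxE eqxx /= mulr1n -exprS.
  by rewrite (@row_mxEr _ 1 1 n.+1) mxE rshift1.
rewrite (bigD1 (widen_ord (leqnSn n.+1) i)) //= ?add1n eqxx mul1r big1 ?addr0; last first.
  move=> l nli; rewrite ?add1n eqSS (_ : (i == l :> nat) = false) ?mul0r //.
  by apply/negbTE; apply: contra nli => /eqP h; apply/eqP/val_inj; rewrite /= h.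
case: (@split_ordP 1 n.+1 j) => [{j}_ -> /[!ord1]|{}j ->].
  rewrite (@row_mxEl _ n.+1 1 n.+1) mxE lshift0 subSS subSn ?leq_ord //.
  by rewrite !exprS; ring.
rewrite (@row_mxEr _ n.+1 1 n.+1) rshift1 mul_mx_diag !mxE ?add1n subSS subSn ?leq_ord //=.
by rewrite !exprS; ring.
Qed.

Lemma det_hvandermonde_lreg n (a b : 'I_n.+1 -> R) : (forall j, GRing.lreg (b j)) ->
  \det (hvandermonde a b)
  = \prod_(i < n.+1) \prod_(j < n.+1 | (i < j)%N) (a j * b i - a i * b j).
Proof.
elim: n a b => [|n IHn] a b b_lreg.
  by rewrite det_mx11 !mxE big_ord1 big1 ?mulr1 // => -[[]].
have := congr1 determinant (hvandermonde_elim a b).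
rewrite det_mulmx det_scalar_sub_shift det_ublock det_scalar1 det_mulmx.
move/(lregX (b_lreg 0)) => ->; rewrite IHn => [|j]; last exact: b_lreg.
rewrite [RHS]big_ord_recl mulrC; congr (_ * _).
  rewrite det_diag [RHS]big_mkcond [RHS]big_ord_recl /= mul1r.
  by apply: eq_bigr => i _; rewrite !mxE.
apply: eq_bigr => i _.
by rewrite [RHS]big_mkcond [RHS]big_ord_recl /= mul1r big_mkcond.
Qed.

End HomogeneousVandermonde.

Lemma det_hvandermonde (R : comNzRingType) n (a b : 'I_n.+1 -> R) :
  \det (hvandermonde a b)
  = \prod_(i < n.+1) \prod_(j < n.+1 | (i < j)%N) (a j * b i - a i * b j).
Proof.
(* Each b j + 'X is monic, hence regular; evaluating at 0 then gives the claim. *)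
pose aX i := (a i)%:P; pose bX i := (b i)%:P + 'X.
have bX_lreg j : GRing.lreg (bX j) by apply: monic_lreg; rewrite /bX addrC monicXaddC.
have := congr1 (horner_eval 0) (det_hvandermonde_lreg aX bX_lreg).
rewrite -det_map_mx rmorph_prod.
have -> : map_mx (horner_eval 0) (hvandermonde aX bX) = hvandermonde a b.
  by apply/matrixP => i j; rewrite !mxE horner_evalE !hornerE.
move=> ->; apply: eq_bigr => i _; rewrite rmorph_prod; apply: eq_bigr => j _.
by rewrite rmorphB !rmorphM /= !horner_evalE !hornerE.
Qed.

Lemma int_seq_rec_uniq (R : idomainType) (u v c : int -> R) :
  (forall N, c N != 0) -> (forall N, u (N + 1) = c N * u N) ->
  (forall N, v (N + 1) = c N * v N) -> u 0 = v 0 -> u =1 v.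
Proof.
move=> c_neq0 uS vS uv0; elim/int_ind => [//|j IH|j IH].
  by rewrite intS addrC uS vS IH.
have jE : - j%:Z = - j.+1%:Z + 1 by rewrite intS; ring.
by move: IH; rewrite jE uS vS; apply: mulfI.
Qed.

Lemma nat_seq_rec2_uniq (R : pzSemiRingType) (u v a b : nat -> R) :
  (forall d, u d.+2 = a d * u d.+1 + b d * u d) ->
  (forall d, v d.+2 = a d * v d.+1 + b d * v d) ->
  u 0%N = v 0%N -> u 1%N = v 1%N -> u =1 v.
Proof.
move=> uSS vSS uv0 uv1 d; suff: u d = v d /\ u d.+1 = v d.+1 by case.
by elim: d => [|d [IH IHS]] //; split=> //; rewrite uSS vSS IH IHS.
Qed.

Lemma big_ord_gtn (R : Type) (idx : R) (op : Monoid.law idx) (k i : nat)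
    (G : nat -> R) :
  \big[op/idx]_(j < k.+1 | (i < j)%N) G j = \big[op/idx]_(d < k - i) G (i + d.+1)%N.
Proof.
rewrite (eq_bigl (fun j : 'I_k.+1 => xpredT (nat_of_ord j) && (i.+1 <= j)%N)) //.
rewrite -(big_geq_mkord i.+1 k.+1 xpredT) -{1}(add0n i.+1) big_addn big_mkord subSS.
by apply: eq_bigr => d _; rewrite addnC addnS.
Qed.

Lemma prodr_expz (F : fieldType) (I : Type) (r : seq I) (P : pred I)
    (e : I -> int) (a : F) : a != 0 ->
  \prod_(i <- r | P i) a ^ e i = a ^ (\sum_(i <- r | P i) e i).
Proof.
by move=> a_neq0; rewrite (big_morph _ (fun u v => expfzDr u v a_neq0) (expr0z a)).
Qed.

Section Carlitz.
Variables (F : fieldType) (q x : F).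
Hypothesis q_neq0 : q != 0.

Lemma cfib_negE (s : F) (j : nat) :
  cfib q (- j%:Z) x s = (cfib_neg q x s j).1 /\
  cfib q (- j%:Z + 1) x s = (cfib_neg q x s j).2.
Proof.
elim: j => [//|j [IH _]]; split; first by [].
by rewrite -[- _ + 1](_ : - j%:Z = _) ?IH // intS; ring.
Qed.

Lemma cfib_rec (s : F) (N : int) : s != 0 ->
  cfib q (N + 2) x s = x * cfib q (N + 1) x s + q ^ N * s * cfib q N x s.
Proof.
move=> s_neq0; case: N => j.
  by rewrite -!PoszD !addn1 addn2 /= -exprnP.
have [fE fE1] := cfib_negE s j.
rewrite (_ : Negz j + 2 = - j%:Z + 1); last by rewrite NegzE intS; ring.
rewrite (_ : Negz j + 1 = - j%:Z); last by rewrite NegzE intS; ring.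
rewrite fE fE1 /= NegzE -invr_expz -exprnP.
by field; rewrite s_neq0 expf_neq0.
Qed.

Lemma expz_pred_mul (z : int) (s : F) : q ^ (z - 1) * (q * s) = q ^ z * s.
Proof. by rewrite mulrA -{2}(expr1z q) -expfzDr // subrK. Qed.

Definition cassini (N : int) (s : F) : F := (-1) ^ N * s ^ (N - 1) * q ^ binz2 N.

Lemma cfib_cassini (s : F) (N : int) : s != 0 ->
  cfib q (N + 1) x s * cfib q (N - 1) x (q * s) - cfib q N x s * cfib q N x (q * s)
  = cassini N s.
Proof.
move=> s_neq0; have qs_neq0 : q * s != 0 by rewrite mulf_neq0.
move: N; apply: (int_seq_rec_uniq (c := fun N => - (q ^ N * s))) => [N|N|N|].
- by rewrite oppr_eq0 mulf_neq0 // expfz_neq0.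
- have := cfib_rec (N - 1) qs_neq0.
  rewrite -addrA (_ : -1 + 2 = 1) // subrK expz_pred_mul => ->.
  by rewrite -addrA (_ : 1 + 1 = 2) // cfib_rec // addrK; ring.
- by rewrite /cassini binz2S !expfzDr ?oppr_eq0 ?oner_eq0 // expr1z; ring.
rewrite /cassini /= sub0r -invr_expz expr1z subn0 expr1.
by field; rewrite s_neq0 q_neq0.
Qed.

(* Both sides satisfy the recurrence of f in d; at d = 1 this is Cassini. *)
Lemma cfib_addition (s : F) (N : int) (d : nat) : s != 0 ->
  cfib q (N + d%:Z) x s * cfib q (N - 1) x (q * s)
    - cfib q N x s * cfib q (N + d%:Z - 1) x (q * s)
  = cassini N s * cfib q d%:Z x (q ^ N * s).
Proof.
move=> s_neq0; have qs_neq0 : q * s != 0 by rewrite mulf_neq0.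
have qNs_neq0 : q ^ N * s != 0 by rewrite mulf_neq0 // expfz_neq0.
move: d; apply: (nat_seq_rec2_uniq (a := fun=> x) (b := fun d => q ^ (N + d%:Z) * s))
  => [d|d||].
- rewrite (_ : N + d.+2%:Z = N + d%:Z + 2); last by rewrite -addrA -PoszD addn2.
  rewrite (_ : N + d.+1%:Z = N + d%:Z + 1); last by rewrite -addrA -PoszD addn1.
  rewrite (_ : N + d%:Z + 2 - 1 = N + d%:Z - 1 + 2); last by ring.
  rewrite (_ : N + d%:Z + 1 - 1 = N + d%:Z - 1 + 1); last by ring.
  by rewrite !cfib_rec // expz_pred_mul; ring.
- cbv beta; rewrite -[d.+2]addn2 -[d.+1]addn1 !PoszD cfib_rec //.
  by rewrite mulrA -expfzDr // [d%:Z + N]addrC; ring.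
- by rewrite addr0 subrr mulr0.
by rewrite -(cfib_cassini N s_neq0) addrK /= mulr1.
Qed.

Lemma prod_cfib_minors (s : F) (n : int) (m k : nat) (i : 'I_k.+1) : s != 0 ->
  \prod_(j < k.+1 | (i < j)%N)
     (cfib q (n + (m * j)%:Z) x s * cfib q (n + (m * i)%:Z - 1) x (q * s)
      - cfib q (n + (m * i)%:Z) x s * cfib q (n + (m * j)%:Z - 1) x (q * s))
  = cassini (n + (m * i)%:Z) s ^+ (k - i)
    * cfac q (k - i) x (q ^ ((m * i)%:Z + n) * s) m.
Proof.
move=> s_neq0.
pose minor j := cfib q (n + (m * j)%:Z) x s * cfib q (n + (m * i)%:Z - 1) x (q * s)
  - cfib q (n + (m * i)%:Z) x s * cfib q (n + (m * j)%:Z - 1) x (q * s).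
rewrite (big_ord_gtn _ _ _ minor) /minor [_ + n]addrC.
under eq_bigr => d _ do rewrite mulnDr PoszD addrA cfib_addition //.
rewrite big_split prodr_const card_ord /cfac big_add1 big_mkord /=; congr (_ * _).
by apply: eq_bigr => d _; rewrite [(m * _.+1)%N]mulnC.
Qed.

Lemma prod_cassini (s : F) (n : int) (m k : nat) : s != 0 ->
  \prod_(i < k.+1) cassini (n + (m * i)%:Z) s ^+ (k - i)
  = (-1) ^ ('C(k.+1, 2)%:Z * n + 'C(k.+1, 3)%:Z * m%:Z)
    * s ^ ('C(k.+1, 2)%:Z * (n - 1) + 'C(k.+1, 3)%:Z * m%:Z)
    * q ^ ('C(k.+1, 2)%:Z * binz2 n + n * m%:Z * 'C(k.+1, 3)%:Z
           + ('C(k.+1, 3) * 'C(m, 2))%:Z + ('C(k.+1, 4) * m ^ 2)%:Z).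
Proof.
move=> s_neq0; have m1_neq0 : (-1 : F) != 0 by rewrite oppr_eq0 oner_eq0.
rewrite /cassini; under eq_bigr do rewrite !exprMn !exprnP !exprz_exp.
rewrite !big_split /= !prodr_expz // sum_weighted_binz2_arith sum_weighted_arith.
rewrite -(sum_weighted_arith (n - 1)); congr (_ * _ ^ _ * _).
by apply: eq_bigr => i _; rewrite addrAC.
Qed.

End Carlitz.

Lemma Xs_neq0 : Xs != 0.
Proof. by rewrite /Xs tofrac_eq0 polyC_eq0 polyX_eq0. Qed.

Lemma Xq_neq0 : Xq != 0.
Proof. by rewrite /Xq tofrac_eq0 !polyC_eq0 polyX_eq0. Qed.

Theorem lemma2 (m k : nat) (n : int) :
  (0 < m)%N -> (0 < k)%N ->
  \det (\matrix_(i < k.+1, j < k.+1)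
          (cfib Xq (n + (m * i)%:Z) Xx Xs ^+ j *
           cfib Xq (n + (m * i)%:Z - 1) Xx (Xq * Xs) ^+ (k - j)))
  = (-1 : RF) ^ ('C(k.+1, 2)%:Z * n + 'C(k.+1, 3)%:Z * m%:Z)
    * Xs ^ ('C(k.+1, 2)%:Z * (n - 1) + 'C(k.+1, 3)%:Z * m%:Z)
    * Xq ^ ('C(k.+1, 2)%:Z * binz2 n + n * m%:Z * 'C(k.+1, 3)%:Z
            + ('C(k.+1, 3) * 'C(m, 2))%:Z + ('C(k.+1, 4) * m ^ 2)%:Z)
    * \prod_(0 <= j < k)
        cfac Xq (k - j) Xx (Xq ^ ((m * j)%:Z + n) * Xs) m.
Proof.
move=> _ _.
pose a (i : 'I_k.+1) := cfib Xq (n + (m * i)%:Z) Xx Xs.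
pose b (i : 'I_k.+1) := cfib Xq (n + (m * i)%:Z - 1) Xx (Xq * Xs).
rewrite -det_tr (_ : _^T = hvandermonde a b); last by apply/matrixP => i j; rewrite !mxE.
rewrite det_hvandermonde /a /b.
rewrite (eq_bigr _ (fun i _ => prod_cfib_minors Xx Xq_neq0 n m i Xs_neq0)).
rewrite big_split (prod_cassini Xq_neq0 n m k Xs_neq0); congr (_ * _).
by rewrite big_ord_recr /= subnn /cfac big_geq // mulr1 big_mkord.
Qed.
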